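(* Let $f$ be a Boolean formula whose clauses $c$ are CNF, cardinality, XOR or NAE constraints over $x_1,\dots,x_n$, and let $F=F_f=\sum_{c}\mathrm{FE}_c$. If $a^\star\in[-1,1]^n$ is a local minimum of $F$ in $[-1,1]^n$, then $a^\star$ is a feasible solution of $F$.
   Context: Boolean values are encoded as $\pm1$, with $-1$ standing for True. Each clause $c$ is regarded as a function $\{\pm1\}^n\to\{\pm1\}$ with value $-1$ exactly when satisfied. $\mathrm{FE}_c$ is its Fourier expansion, i.e. the unique multilinear polynomial agreeing with $c$ on $\{\pm1\}^n$. Local minimum: $a$ is a local minimum of $F$ in a set $\Delta$ if there is $\delta>0$ such that $F(a)\le F(a')$ for all $a'\in\Delta$ with $\|a-a'\|_2^2\le\delta$. Feasibility: for $a\in[-1,1]^n$, let $I=\{i: a_i\in\{\pm1\}\}$. Let $F_{I\gets a_I}$ be the polynomial obtained from $F$ by fixing $x_i=a_i$ for every $i\in I$. Then $a$ is feasible if $F_{I\gets a_I}$ is a constant polynomial. *)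

From HB Require Import structures.
From mathcomp Require Import all_boot all_order all_algebra.
From mathcomp Require Import reals.
From mathcomp Require Import mpoly.
Set Implicit Arguments. Unset Strict Implicit. Unset Printing Implicit Defensive.
Import Order.TTheory GRing.Theory Num.Theory.
Local Open Scope ring_scope.

(* Boolean values are encoded as +-1 with -1 = True.  A point of {+-1}^n is
   represented by b : {ffun 'I_n -> bool}, with b i = true meaning x_i = -1
   (i.e. x_i is True). *)

(* A literal: a variable index together with a flag "negated". *)
Definition lit (n : nat) := ('I_n * bool)%type.

Definition lit_val n (b : {ffun 'I_n -> bool}) (l : lit n) : bool :=
  if l.2 then ~~ b l.1 else b l.1.

Inductive clause (n : nat) :=
| CNF of seq (lit n)
| Card of seq (lit n) & nat
| XOR of seq (lit n)
| NAE of seq (lit n).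

Definition clause_sat n (c : clause n) (b : {ffun 'I_n -> bool}) : bool :=
  match c with
  | CNF ls => has (lit_val b) ls
  | Card ls k => (k <= count (lit_val b) ls)%N
  | XOR ls => odd (count (lit_val b) ls)
  | NAE ls => has (lit_val b) ls && ~~ all (lit_val b) ls
  end.

Definition pm (R : nzRingType) (t : bool) : R := if t then -1 else 1.

Definition clause_fun (R : nzRingType) n (c : clause n) (b : {ffun 'I_n -> bool}) : R :=
  pm R (clause_sat c b).

Definition fourier_coef (R : fieldType) n (c : clause n) (S : {set 'I_n}) : R :=
  (2%:R ^+ n)^-1 * \sum_(b : {ffun 'I_n -> bool})
                      clause_fun R c b * \prod_(i in S) pm R (b i).

Definition FE (R : fieldType) n (c : clause n) : {mpoly R[n]} :=
  \sum_(S : {set 'I_n}) fourier_coef R c S *: \prod_(i in S) 'X_i.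

Definition F_of (R : fieldType) n (f : seq (clause n)) : {mpoly R[n]} :=
  \sum_(c <- f) FE R c.

Definition cube (R : realFieldType) n : pred ('I_n -> R) :=
  fun a => [forall i, (-1 <= a i <= 1)].

Definition local_min_in (R : realFieldType) n (P : {mpoly R[n]})
  (D : pred ('I_n -> R)) (a : 'I_n -> R) : Prop :=
  exists2 delta : R, 0 < delta &
    forall a' : 'I_n -> R, D a' ->
      \sum_(i < n) (a i - a' i) ^+ 2 <= delta -> P.@[a] <= P.@[a'].

Definition fixed_set (R : realFieldType) n (a : 'I_n -> R) : {set 'I_n} :=
  [set i | (a i == 1) || (a i == -1)].

Definition restrict (R : realFieldType) n (P : {mpoly R[n]}) (a : 'I_n -> R) : {mpoly R[n]} :=
  comp_mpoly [tuple (if i \in fixed_set a then (a i)%:MP_[n] else 'X_i) | i < n] P.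

Definition feasible (R : realFieldType) n (P : {mpoly R[n]}) (a : 'I_n -> R) : Prop :=
  exists k : R, restrict P a = k%:MP_[n].

From HB Require Import structures.
From mathcomp Require Import all_boot all_order all_algebra.
From mathcomp Require Import reals.
From mathcomp Require Import mpoly.
From mathcomp Require Import lra.
Set Implicit Arguments. Unset Strict Implicit. Unset Printing Implicit Defensive.
Import Order.TTheory GRing.Theory Num.Theory.
Local Open Scope ring_scope.

(* F_f is multilinear, and only multilinearity matters.  Expand it around a:
   F(a + eps) = sum_T e_T prod_(i in T) eps_i.  If a is a local minimum in the
   cube, then e_T = 0 for every nonempty T of coordinates with |a_i| < 1: for an
   inclusion-minimal counterexample T, moving only the coordinates in T by +-t
   changes F by exactly e_T * (+-t^|T|), and one of the two signs decreases F.
   Fixing the coordinates a_i = +-1 kills every term of the expansion that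
   involves them, so only the constant term e_∅ survives. *)

Lemma prodrD_subset (A : comNzRingType) (I : finType) (S : {set I}) (x y : I -> A) :
  \prod_(i in S) (x i + y i) =
  \sum_(T : {set I} | T \subset S) \prod_(i in T) y i * \prod_(i in S :\: T) x i.
Proof.
rewrite big_mkcond /=.
transitivity (\prod_i ((if i \in S then y i else 0) + (if i \in S then x i else 1))).
  by apply: eq_bigr => i _; case: ifP => _; [exact: addrC | rewrite add0r].
rewrite bigA_distr (bigID (fun T : {set I} => T \subset S)) /=.
rewrite [X in _ + X]big1 ?addr0 => [|T /subsetPn[i iT iS]]; last first.
  by rewrite (bigD1 i) //= iT (negbTE iS) mul0r.
apply: eq_bigr => T TS; rewrite (bigID (mem T)) /=; congr (_ * _).
  by apply: eq_big => // i iT; rewrite iT (subsetP TS i iT).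
rewrite [LHS]big_mkcond [RHS]big_mkcond; apply: eq_bigr => i _ /=.
by rewrite in_setD; case: (i \in T); case: (i \in S).
Qed.

Section Taylor.
Variables (R : comNzRingType) (n : nat) (c : {set 'I_n} -> R) (a : 'I_n -> R).

Definition multilinear : {mpoly R[n]} := \sum_(S : {set 'I_n}) c S *: \prod_(i in S) 'X_i.

Definition taylor_coef (T : {set 'I_n}) : R :=
  \sum_(S : {set 'I_n} | T \subset S) c S * \prod_(i in S :\: T) a i.

Lemma multilinear_taylor :
  multilinear = \sum_(T : {set 'I_n}) taylor_coef T *: \prod_(i in T) ('X_i - (a i)%:MP_[n]).
Proof.
rewrite /multilinear.
transitivity (\sum_(S : {set 'I_n}) \sum_(T : {set 'I_n} | T \subset S)
    (c S * \prod_(i in S :\: T) a i) *: \prod_(i in T) ('X_i - (a i)%:MP_[n])).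
  apply: eq_bigr => S _.
  rewrite (eq_bigr (fun i => (a i)%:MP_[n] + ('X_i - (a i)%:MP_[n]))); last first.
    by move=> i _; rewrite addrC subrK.
  rewrite prodrD_subset scaler_sumr; apply: eq_bigr => T _.
  by rewrite -rmorph_prod mulrC mul_mpolyC scalerA.
rewrite (exchange_big_dep xpredT) //=; apply: eq_bigr => T _.
by rewrite /taylor_coef scaler_suml.
Qed.

Lemma meval_multilinear_shift (eps : 'I_n -> R) :
  multilinear.@[fun i => a i + eps i] =
  \sum_(T : {set 'I_n}) taylor_coef T * \prod_(i in T) eps i.
Proof.
rewrite multilinear_taylor raddf_sum; apply: eq_bigr => T _.
rewrite /= mevalZ rmorph_prod; congr (_ * _); apply: eq_bigr => i _.
by rewrite /= mevalB mevalXU mevalC addrC addKr.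
Qed.

Lemma comp_multilinear_fix (I : {set 'I_n}) :
  comp_mpoly [tuple (if i \in I then (a i)%:MP_[n] else 'X_i) | i < n] multilinear =
  \sum_(T : {set 'I_n} | T \subset ~: I) taylor_coef T *: \prod_(i in T) ('X_i - (a i)%:MP_[n]).
Proof.
rewrite multilinear_taylor raddf_sum (bigID (fun T : {set _} => T \subset ~: I)) /=.
rewrite [X in _ + X]big1 ?addr0 => [|T /subsetPn[i iT]]; last first.
  rewrite in_setC negbK => iI.
  by rewrite comp_mpolyZ rmorph_prod (bigD1 i) //= comp_mpolyB comp_mpolyXU
    -(tnth_nth 0) tnth_mktuple iI comp_mpolyC subrr mul0r scaler0.
apply: eq_bigr => T TI; rewrite comp_mpolyZ rmorph_prod; congr (_ *: _).
apply: eq_bigr => i iT; rewrite /= comp_mpolyB comp_mpolyXU -(tnth_nth 0) tnth_mktuple.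
by rewrite comp_mpolyC; have := subsetP TI i iT; rewrite in_setC => /negbTE ->.
Qed.

End Taylor.

Lemma F_of_multilinear (R : fieldType) n (f : seq (clause n)) :
  F_of R f = multilinear (fun S => \sum_(cl <- f) fourier_coef R cl S).
Proof.
rewrite /F_of /FE /multilinear exchange_big; apply: eq_bigr => S _.
by rewrite scaler_suml.
Qed.

Section LocalMinimum.
Variables (R : realFieldType) (n : nat) (a : 'I_n -> R).
Hypothesis a_cube : cube a.

Lemma cube_free_coord i : i \notin fixed_set a -> `|a i| < 1.
Proof.
rewrite inE negb_or => /andP[a_neq1 a_neqN1].
move/forallP: a_cube => /(_ i) /andP[aN1 a1].
by rewrite ltr_norml !lt_neqAle aN1 a1 a_neq1 eq_sym a_neqN1.
Qed.

Lemma local_min_free_shift (P : {mpoly R[n]}) (T : {set 'I_n}) :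
  local_min_in P (@cube R n) a -> T \subset ~: fixed_set a ->
  exists2 t : R, 0 < t & forall eps : 'I_n -> R,
    (forall i, i \notin T -> eps i = 0) -> (forall i, `|eps i| <= t) ->
    P.@[a] <= P.@[fun i => a i + eps i].
Proof.
move=> [d d_gt0 a_min] T_free.
pose t := \big[Num.min/Num.min 1 (d / n.+1%:R)]_(i in T) (1 - `|a i|).
have t_gt0 : 0 < t.
  apply/bigmin_gtP; split; first by rewrite lt_min ltr01 divr_gt0 ?ltr0n.
  by move=> i iT; rewrite subr_gt0 cube_free_coord // -in_setC (subsetP T_free).
have [t_le1 t_led] : t <= 1 /\ t <= d / n.+1%:R.
  by apply/andP; rewrite -le_min bigmin_le_id.
have t_margin i : i \in T -> t <= 1 - `|a i| by move=> iT; exact: bigmin_le_cond.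
exists t => // eps eps_supp eps_le; apply: a_min.
  apply/forallP => i; have [iT|iT] := boolP (i \in T); last first.
    by rewrite eps_supp // addr0; move/forallP: a_cube.
  rewrite -ler_norml; apply: le_trans (ler_normD _ _) _.
  by have := eps_le i; have := t_margin i iT; lra.
apply: le_trans (_ : \sum_(i < n) t <= _).
  apply: ler_sum => i _; rewrite opprD addrA subrr add0r sqrrN.
  by have := eps_le i; rewrite ler_norml => /andP[? ?]; nra.
have : t * n.+1%:R <= d by rewrite -ler_pdivlMr ?ltr0n.
by rewrite sumr_const card_ord -mulr_natr -natr1; nra.
Qed.

Section MultilinearLocalMinimum.
Variable c : {set 'I_n} -> R.
Hypothesis a_min : local_min_in (multilinear c) (@cube R n) a.

Lemma taylor_coef_minimal_eq0 (T : {set 'I_n}) :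
  T != set0 -> T \subset ~: fixed_set a ->
  (forall U : {set 'I_n}, U \proper T -> U != set0 -> taylor_coef c a U = 0) ->
  taylor_coef c a T = 0.
Proof.
move=> T_neq0 T_free T_min.
have [t t_gt0 t_min] := local_min_free_shift a_min T_free.
have shiftE eps : (forall i, i \notin T -> eps i = 0) ->
    (multilinear c).@[fun i => a i + eps i] =
    taylor_coef c a set0 + taylor_coef c a T * \prod_(i in T) eps i.
  move=> eps_supp; rewrite meval_multilinear_shift (bigD1 set0) //= big_set0 mulr1.
  rewrite (bigD1 T) //= [X in _ + (_ + X)]big1 ?addr0 // => U /andP[U_neq0 U_neqT].
  have [UT|/subsetPn[i iU iT]] := boolP (U \subset T).
    by rewrite T_min ?mul0r // properEneq U_neqT UT.
  by rewrite (bigD1 i) //= eps_supp // mul0r mulr0.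
have [j jT] := set0Pn _ T_neq0.
have evalE : (multilinear c).@[a] = taylor_coef c a set0.
  rewrite -(@meval_eq _ _ (fun i => a i + 0)) => [|i]; last exact: addr0.
  by rewrite shiftE // (bigD1 j) //= mul0r mulr0 addr0.
pose bump (s : R) i := if i \in T then (if i == j then s else 1) * t else 0.
have bump_prod s : \prod_(i in T) bump s i = s * t ^+ #|T|.
  rewrite (eq_bigr (fun i => (if i == j then s else 1) * t)); last first.
    by move=> i iT; rewrite /bump iT.
  rewrite big_split prodr_const /= (bigD1 j) //= eqxx big1 ?mulr1 //.
  by move=> i /andP[_ /negbTE ->].
have coef_sign s : `|s| = 1 -> 0 <= taylor_coef c a T * (s * t ^+ #|T|).
  move=> s_norm; have bump_supp i : i \notin T -> bump s i = 0.
    by move=> /negbTE iT; rewrite /bump iT.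
  have bump_le i : `|bump s i| <= t.
    rewrite /bump; case: ifP => _; last by rewrite normr0 ltW.
    by case: ifP => _; rewrite ?mul1r ?normrM ?s_norm ?mul1r gtr0_norm.
  by have := t_min _ bump_supp bump_le; rewrite evalE shiftE // bump_prod lerDl.
have := coef_sign 1 (normr1 R); have := coef_sign (-1) (normrN1 R).
rewrite mulNr mul1r mulrN oppr_ge0 => coef_le coef_ge.
have /eqP : taylor_coef c a T * t ^+ #|T| = 0 by apply/le_anti/andP.
by rewrite mulf_eq0 expf_eq0 (gt_eqF t_gt0) andbF orbF => /eqP.
Qed.

Lemma taylor_coef_free_eq0 (T : {set 'I_n}) :
  T != set0 -> T \subset ~: fixed_set a -> taylor_coef c a T = 0.
Proof.
have [k] := ubnP #|T|; elim: k T => // k IH T; rewrite ltnS => T_card T_neq0 T_free.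
apply: taylor_coef_minimal_eq0 => // U UT U_neq0; apply: IH => //.
  exact: leq_trans (proper_card UT) T_card.
exact: subset_trans (proper_sub UT) T_free.
Qed.

Lemma multilinear_local_min_feasible : feasible (multilinear c) a.
Proof.
exists (taylor_coef c a set0).
rewrite /restrict comp_multilinear_fix (bigD1 set0) ?sub0set //= big_set0.
rewrite big1 ?addr0 => [|T /andP[T_free T_neq0]]; last first.
  by rewrite taylor_coef_free_eq0 ?scale0r.
by rewrite -mul_mpolyC mulr1.
Qed.

End MultilinearLocalMinimum.

End LocalMinimum.

Unset Implicit Arguments.
Theorem lemma6 (R : realType) (n : nat) (f : seq (clause n)) (a : 'I_n -> R) :
  cube a -> local_min_in (F_of R f) (@cube R n) a -> feasible (F_of R f) a.
Proof.
rewrite F_of_multilinear => a_cube; exact: multilinear_local_min_feasible.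
Qed.
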